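(* Let $n\ge 5$ and let $\sigma$ be a maximal simplex of $\Delta_n$ that covers all places. If there exists $w\in\sigma$ with $N(w)\cap\sigma=\{v\}$, then $N(v)\subseteq\sigma$.
   Context: $\mathbb{I}_n$ is the $n$-dimensional hypercube graph on vertex set $\{0,1\}^n$ (adjacent iff differing in exactly one coordinate), with Hamming distance $d(v,w)=\#\{i: v(i)\ne w(i)\}$, $v(i)$ the $i$-th coordinate. $\Delta_n=\mathcal{VR}(\mathbb{I}_n;3)$ is the simplicial complex whose simplices are the subsets $\sigma\subseteq\{0,1\}^n$ with $d(x,y)\le 3$ for all $x,y\in\sigma$. A simplex $\sigma$ covers all places if for each $i\in[n]=\{1,\dots,n\}$ there are $v,w\in\sigma$ with $v(i)=1$ and $w(i)=0$. $N(v)=\{v^i: i\in[n]\}$, where $v^i$ is $v$ with coordinate $i$ changed. *)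

From mathcomp Require Import all_boot.
Set Implicit Arguments. Unset Strict Implicit. Unset Printing Implicit Defensive.

Definition vert (n : nat) := {ffun 'I_n -> bool}.

Definition hdist n (v w : vert n) : nat := #|[set i : 'I_n | v i != w i]|.

Definition flip n (v : vert n) (i : 'I_n) : vert n :=
  [ffun j => if j == i then ~~ v j else v j].

Definition nbhd n (v : vert n) : {set vert n} := [set flip v i | i : 'I_n].

(* simplices of Delta_n = VR(I_n; 3): nonempty sets with pairwise distance <= 3 *)
Definition is_simplex n (s : {set vert n}) : bool :=
  (s != set0) && [forall x in s, forall y in s, hdist x y <= 3].

Definition maximal_simplex n (s : {set vert n}) : bool :=
  is_simplex s && [forall t : {set vert n}, (s \proper t) ==> ~~ is_simplex t].

Definition covers_all_places n (s : {set vert n}) : bool :=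
  [forall i : 'I_n, [exists v in s, v i] && [exists w in s, ~~ w i]].

From mathcomp Require Import all_boot zify.
Set Implicit Arguments. Unset Strict Implicit. Unset Printing Implicit Defensive.

(* Measure every vertex by its support [supp w x], the set of places where it
   differs from w; then d(x, y) = |X| + |Y| - 2|X ∩ Y| and every x in sigma has
   |X| <= 3.  Write v = w^i.  Since no other neighbour w^k lies in sigma,
   maximality yields for each k != i a vertex of sigma with support of size 3
   containing i and avoiding k.  If some v^j (j != i) were missing, maximality
   would give x in sigma with support {a, b} avoiding i; the witnesses for a and
   for b then have supports {i, b, c} and {i, a, c}, and a vertex of sigma
   covering a fifth place k (here n >= 5 and covering all places are used) is
   too far from one of {a, b}, {i, b, c}, {i, a, c}: each of i, a, b, c lies in
   exactly two of them. *)

Lemma cardsI1 (T : finType) (A : {set T}) (a : T) : #|A :&: [set a]| = (a \in A).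
Proof.
rewrite (cardsD1 a) !inE eqxx andbT -[RHS]addn0; congr (_ + _); apply/eqP.
by rewrite cards_eq0; apply/eqP/setP => x; rewrite !inE; case: eqP; rewrite ?andbF.
Qed.

Lemma cardsI_setU1r (T : finType) (A B : {set T}) (c : T) :
  c \notin B -> #|A :&: (B :|: [set c])| = #|A :&: B| + (c \in A).
Proof.
move=> cB; rewrite (cardsD1 c) !inE eqxx orbT andbT addnC; congr (_ + _).
by apply: eq_card => x; rewrite !inE; case: eqP => [->|]; rewrite ?(negbTE cB) ?andbF ?orbF.
Qed.

Lemma eq_set3 (T : finType) (A : {set T}) (a b c : T) :
  uniq [:: a; b; c] -> #|A| <= 3 -> a \in A -> b \in A -> c \in A -> A = [set a; b; c].
Proof.
rewrite /= !inE negb_or => /and3P[/andP[ab ac] bc _] A3 aA bA cA.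
have S3 : #|[set a; b; c]| = 3.
  rewrite -(setIid [set a; b; c]) !cardsI_setU1r ?cardsI1 !inE ?eqxx ?orbT //;
  by rewrite ?negb_or ?[b == _]eq_sym ?[c == _]eq_sym ?ab ?ac ?bc.
apply/esym/eqP; rewrite eqEcard S3 A3 andbT.
by apply/subsetP => x; rewrite !inE => /orP[/orP[]|] /eqP ->.
Qed.

Lemma four_places_conflict (T : finType) (U : {set T}) (k c a b i : T) :
  uniq [:: k; c; a; b; i] -> k \in U -> #|U| <= 3 ->
  #|U| + 2 <= 3 + 2 * #|U :&: [set a; b]| ->
  #|U| + 3 <= 3 + 2 * #|U :&: [set c; b; i]| ->
  #|U| + 3 <= 3 + 2 * #|U :&: [set c; a; i]| -> False.
Proof.
move=> kcabi kU U3; have := subset_leq_card (subsetIl U [set k; c; a; b; i]).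
move: kcabi; rewrite -rev_uniq /= !inE !negb_or.
move=> /and5P[/and4P[ib ia ic ik] /and3P[ba bc bk] /andP[ac ak] ck _].
rewrite !cardsI_setU1r ?cardsI1 ?inE ?negb_or ?ib ?ia ?ic ?ik ?ba ?bc ?bk ?ac ?ak ?ck // kU.
by clear -U3; lia.
Qed.

Lemma exists_notin_set4 (T : finType) (a b c d : T) :
  4 < #|T| -> exists x, x \notin [set a; b; c; d].
Proof.
move=> T4; have := cardsC [set a; b; c; d]; rewrite !cardsU !cards1 => T_split.
have /card_gt0P[x] : 0 < #|~: [set a; b; c; d]| by lia.
by rewrite inE; exists x.
Qed.

Section Hypercube.
Variable n : nat.
Implicit Types (s : {set vert n}) (u w x y : vert n).

Definition supp w x : {set 'I_n} := [set i | x i != w i].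

Lemma hdistxx x : hdist x x = 0.
Proof. by apply/eqP; rewrite cards_eq0; apply/eqP/setP => i; rewrite !inE eqxx. Qed.

Lemma hdistC x y : hdist x y = hdist y x.
Proof. by apply: eq_card => i; rewrite !inE eq_sym. Qed.

Lemma hdist_supp w x y :
  hdist x y + 2 * #|supp w x :&: supp w y| = #|supp w x| + #|supp w y|.
Proof.
have -> : hdist x y = #|(supp w x :|: supp w y) :\: (supp w x :&: supp w y)|.
  by apply: eq_card => i; rewrite !inE; case: (x i); case: (y i); case: (w i).
have IU : supp w x :&: supp w y \subset supp w x :|: supp w y.
  exact: subset_trans (subsetIl _ _) (subsetUl _ _).
rewrite cardsDS //; have := cardsUI (supp w x) (supp w y).
by have := subset_leq_card IU; lia.
Qed.

Lemma supp_flip w a : supp w (flip w a) = [set a].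
Proof. by apply/setP => i; rewrite !inE ffunE; case: (i == a); case: (w i). Qed.

Lemma supp_flip2 w a j : j != a -> supp w (flip (flip w a) j) = [set a; j].
Proof.
move=> ja; apply/setP => i; rewrite !inE !ffunE.
case: (eqVneq i j) => [->|_]; first by rewrite (negbTE ja) orbT; case: (w j).
by case: (i == a); case: (w i).
Qed.

Lemma flip_inj w : injective (flip w).
Proof.
by move=> a b /(congr1 (supp w)); rewrite !supp_flip => /setP/(_ a); rewrite !inE eqxx => /esym/eqP.
Qed.

Lemma flipK w a : flip (flip w a) a = w.
Proof. by apply/ffunP => i; rewrite !ffunE; case: eqP => [->|]; rewrite ?negbK. Qed.

Lemma maximal_simplex_dist s x y :
  maximal_simplex s -> x \in s -> y \in s -> hdist x y <= 3.
Proof. by case/andP => /andP[_ /forall_inP/(_ x) H] _ xs /(forall_inP (H xs)). Qed.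

Lemma maximal_simplex_far s u :
  maximal_simplex s -> u \notin s -> exists2 x, x \in s & 3 < hdist x u.
Proof.
move=> smax us; have sdist := maximal_simplex_dist smax.
case/andP: smax => _ /forallP/(_ (u |: s)).
have us_ne0 : u |: s != set0 by apply/set0Pn; exists u; rewrite setU11.
rewrite properUr ?sub1set // /is_simplex us_ne0 /=.
case/forall_inPn => x xs /forall_inPn[y ys]; rewrite -ltnNge.
move: xs ys; rewrite !in_setU1 => /predU1P[-> | xs] /predU1P[-> | ys].
- by rewrite hdistxx.
- by exists y; rewrite // hdistC.
- by exists x.
- by rewrite ltnNge sdist.
Qed.

Lemma covers_supp s w k :
  covers_all_places s -> exists2 u, u \in s & k \in supp w u.
Proof.
move=> /forallP/(_ k)/andP[/exists_inP[u1 u1s u1k] /exists_inP[u0 u0s u0k]].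
case wk: (w k); [exists u0 | exists u1] => //; rewrite inE wk.
- by case: (u0 k) u0k.
- by rewrite u1k.
Qed.

End Hypercube.

Section Configuration.
Variables (n : nat) (s : {set vert n}) (w : vert n) (i : 'I_n).
Hypotheses (smax : maximal_simplex s) (ws : w \in s) (Nw : nbhd w :&: s = [set flip w i]).
Implicit Types (x y z : vert n) (a b k : 'I_n).

Lemma flip_in : flip w i \in s.
Proof. by have /setIP[] : flip w i \in nbhd w :&: s by rewrite Nw set11. Qed.

Lemma flip_notin k : k != i -> flip w k \notin s.
Proof.
move=> ki; apply: contra ki => fks; apply/eqP/(@flip_inj _ w)/set1P.
by rewrite -Nw inE fks andbT; apply/imsetP; exists k.
Qed.

Lemma card_supp_le3 x : x \in s -> #|supp w x| <= 3.
Proof. by move=> xs; have := maximal_simplex_dist smax xs ws. Qed.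

Lemma supp_overlap x y : x \in s -> y \in s ->
  #|supp w x| + #|supp w y| <= 3 + 2 * #|supp w x :&: supp w y|.
Proof.
move=> xs ys; have := hdist_supp w x y; have := maximal_simplex_dist smax xs ys.
by move: (hdist x y) => d; lia.
Qed.

Lemma far_from_flip k : k != i ->
  exists2 y, y \in s & [/\ #|supp w y| = 3, k \notin supp w y & i \in supp w y].
Proof.
move=> ki; have [y ys far] := maximal_simplex_far smax (flip_notin ki).
exists y => //; have := supp_overlap ys flip_in; have := card_supp_le3 ys.
have := hdist_supp w y (flip w k); rewrite !supp_flip !cards1 !cardsI1.
move: far; case: (k \in _); case: (i \in _).
all: by move: (hdist _ _) #|_| => d m /= *; (try split); lia.
Qed.

Lemma far_from_flip_pair x a b : x \in s -> supp w x = [set a; b] -> a != b -> a != i ->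
  exists2 y, y \in s & [/\ #|supp w y| = 3, a \notin supp w y, i \in supp w y & b \in supp w y].
Proof.
move=> xs Dx ab ai; have [y ys [y3 ay iy]] := far_from_flip ai.
exists y => //; split => //.
have := supp_overlap xs ys; rewrite Dx y3 cards2 ab setIC cardsI_setU1r ?cardsI1.
  by rewrite (negbTE ay); case: (b \in _).
by rewrite inE eq_sym.
Qed.

Lemma exists_common_place y z : y \in s -> z \in s ->
  #|supp w y| = 3 -> #|supp w z| = 3 -> i \in supp w y -> i \in supp w z ->
  exists2 c, c \in supp w y :&: supp w z & c != i.
Proof.
move=> ys zs y3 z3 iy iz; have := supp_overlap ys zs.
rewrite y3 z3 (cardsD1 i) in_setI iy iz /= => YZ.
have /card_gt0P[c] : 0 < #|supp w y :&: supp w z :\ i|.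
  by move: YZ; move: #|_ :\ i| => m; lia.
by rewrite in_setD1 => /andP[ci cYZ]; exists c.
Qed.

Lemma card_supp_avoiding_neq2 x : 5 <= n -> covers_all_places s -> x \in s ->
  i \notin supp w x -> #|supp w x| != 2.
Proof.
move=> n5 cov xs ix; apply/negP => /cards2P[a [b [ab Dx]]].
have ai : a != i by apply: contraNneq ix => <-; rewrite Dx !inE eqxx.
have bi : b != i by apply: contraNneq ix => <-; rewrite Dx !inE eqxx orbT.
have Dx' : supp w x = [set b; a] by rewrite Dx setUC.
have ba : b != a by rewrite eq_sym.
have [y ys [y3 ay iy yb]] := far_from_flip_pair xs Dx ab ai.
have [z zs [z3 bz iz za]] := far_from_flip_pair xs Dx' ba bi.
have [c /setIP[cy cz] ci] := exists_common_place ys zs y3 z3 iy iz.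
have ca : c != a by apply: contraNneq ay => <-.
have cb : c != b by apply: contraNneq bz => <-.
have Dy : supp w y = [set c; b; i] by apply: eq_set3; rewrite ?y3 //= !inE negb_or cb ci bi.
have Dz : supp w z = [set c; a; i] by apply: eq_set3; rewrite ?z3 //= !inE negb_or ca ci ai.
have [k kcabi] : exists k, k \notin [set c; a; b; i].
  by apply: exists_notin_set4; rewrite card_ord.
have [u us ku] := covers_supp w k cov.
apply: (@four_places_conflict _ (supp w u) k c a b i _ ku (card_supp_le3 us)).
- move: kcabi; rewrite /= !inE !negb_or => /andP[/andP[/andP[-> ->] ->] ->].
  by rewrite ca cb ci ab ai bi.
- by have := supp_overlap us xs; rewrite Dx cards2 ab.
- by have := supp_overlap us ys; rewrite y3 Dy.
- by have := supp_overlap us zs; rewrite z3 Dz.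
Qed.

Lemma nbhd_flip_subset : 5 <= n -> covers_all_places s -> nbhd (flip w i) \subset s.
Proof.
move=> n5 cov; apply/subsetP => _ /imsetP[j _ ->].
have [->|ji] := eqVneq j i; first by rewrite flipK.
apply: contraT => fs; have [x xs far] := maximal_simplex_far smax fs.
have := hdist_supp w x (flip (flip w i) j).
rewrite supp_flip2 // cards2 (eq_sym i j) ji cardsI_setU1r ?cardsI1; last by rewrite inE.
have := supp_overlap xs flip_in; rewrite supp_flip cards1 cardsI1.
have := card_supp_avoiding_neq2 n5 cov xs; have := card_supp_le3 xs.
move: far; case: (i \in supp w x); case: (j \in supp w x).
all: by move: (hdist _ _) #|supp w x| => d m /=; lia.
Qed.

End Configuration.

Theorem mainTheorem7 (n : nat) (s : {set vert n}) (v : vert n) :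
  5 <= n ->
  maximal_simplex s ->
  covers_all_places s ->
  (exists2 w, w \in s & nbhd w :&: s = [set v]) ->
  nbhd v \subset s.
Proof.
move=> n5 smax cov [w ws Nw].
have /setIP[/imsetP[i _ vE] _] : v \in nbhd w :&: s by rewrite Nw set11.
by rewrite vE in Nw *; apply: nbhd_flip_subset.
Qed.
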